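(* Let $K$ be a field of characteristic zero, $m\in K[x,y]$ irreducible over $K(x)$ with $n=\deg_y(m)$, and $A=K(x)[y]/\langle m\rangle$ equipped with the derivation $'$ extending $d/dx$. Let $W=(\omega_1,\dots,\omega_n)$ be a suitable basis of $A$ with $e\in K[x]$, $M=(m_{i,j})\in K[x]^{n\times n}$ such that $eW'=MW$ and $\gcd(e,m_{1,1},\dots,m_{n,n})=1$. Let $h=\sum_{i=1}^n\frac{h_i}{de}\omega_i$ with $h_1,\dots,h_n,d\in K[x]$, $\gcd(d,e)=\gcd(h_1,\dots,h_n,d)=1$ and $d$ squarefree. If $h$ is integrable in $A$, then $d\in K$.
   Context: $h$ is integrable in $A$ if $h=H'$ for some $H\in A$. An element $f\in A$ is integral if for every $a\in\bar K$ (algebraic closure of $K$) all $n$ Puiseux series expansions $\sigma_i(f)\in\bigcup_{r\ge1}\bar K((\,(x-a)^{1/r}))$ of $f$ at $a$ (obtained by substituting the $n$ Puiseux roots of $m$ at $a$ for $y$) have nonnegative valuation (least exponent). A suitable basis is a $K(x)$-basis of $A$ consisting of integral elements for which the normalized $e$ above is squarefree. *)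

From HB Require Import structures.
From mathcomp Require Import all_boot all_order all_algebra.
Set Implicit Arguments. Unset Strict Implicit. Unset Printing Implicit Defensive.
Import GRing.Theory.
Local Open Scope ring_scope.

(* K(x) = {fraction {poly K}}, A = K(x)[y]/<m> represented by
   polynomials in y over K(x), compared modulo m. *)

Section AlgFun.
Variable K : fieldType.

Notation Kx := {poly K}.
Notation F := {fraction {poly K}}.

Definition toF (p : Kx) : F := @tofrac _ p.

Definition derivF (f : F) : F :=
  let r := repr f in
  toF ((\n_r)^`() * \d_r - \n_r * (\d_r)^`()) / toF (\d_r ^+ 2).

Definition liftm (m : {poly Kx}) : {poly F} := map_poly toF m.

(* inverse of a modulo mm (via Bezout), meaningful when a, mm coprime *)
Definition invmod (a mm : {poly F}) : {poly F} :=
  let e := egcdp a mm in ((e.1 * a + e.2 * mm)`_0)^-1 *: e.1.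

Definition eqA (m : {poly Kx}) (P Q : {poly F}) : Prop :=
  (P - Q) %% liftm m = 0.

(* y' = - m_x / m_y in A *)
Definition yprime (m : {poly Kx}) : {poly F} :=
  - (map_poly derivF (liftm m)) * invmod (liftm m)^`() (liftm m).

Definition derA (m : {poly Kx}) (P : {poly F}) : {poly F} :=
  (map_poly derivF P + P^`() * yprime m) %% liftm m.

Definition integralA (m : {poly Kx}) (f : {poly F}) : Prop :=
  exists P : {poly Kx}, P \is monic /\
    eqA m (map_poly (fun p : Kx => (toF p)%:P) P).[f] 0.

Definition basisA (m : {poly Kx}) (n : nat) (W : 'I_n -> {poly F}) : Prop :=
  (forall c : 'I_n -> F, eqA m (\sum_(i < n) c i *: W i) 0 -> forall i, c i = 0)
  /\ (forall P : {poly F}, exists c : 'I_n -> F, eqA m P (\sum_(i < n) c i *: W i)).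

Definition derRel (m : {poly Kx}) (n : nat) (W : 'I_n -> {poly F})
    (e : Kx) (M : 'M[Kx]_n) : Prop :=
  forall i : 'I_n,
    eqA m (toF e *: derA m (W i)) (\sum_(j < n) toF (M i j) *: W j).

Definition coprime_mx (n : nat) (e : Kx) (M : 'M[Kx]_n) : Prop :=
  forall q : Kx, q %| e -> (forall i j, q %| M i j) -> (size q <= 1)%N.

Definition squarefree (p : Kx) : Prop :=
  forall q : Kx, q * q %| p -> (size q <= 1)%N.

Definition suitable (m : {poly Kx}) (n : nat) (W : 'I_n -> {poly F}) : Prop :=
  basisA m W /\ (forall i, integralA m (W i)) /\
  (forall (e : Kx) (M : 'M[Kx]_n), derRel m W e M -> coprime_mx e M -> squarefree e).

Definition integrableA (m : {poly Kx}) (h : {poly F}) : Prop :=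
  exists H : {poly F}, eqA m (derA m H) h.

End AlgFun.

From HB Require Import structures.
From mathcomp Require Import all_boot all_order all_algebra.
From mathcomp Require Import ring.
From Stdlib Require Import Classical.
Import GRing.Theory.
Local Open Scope ring_scope.
Set Implicit Arguments. Unset Strict Implicit.

(* Write an antiderivative as H = sum_i c_i w_i with c_i in K(x).  Since e W' = M W,
   comparing coordinates in H' = h gives h_j/(de) = c_j' + sum_i c_i m_(i,j)/e.
   Let p be an irreducible factor of d: p divides d exactly once and does not divide e.
   Write c_i = a_i/(p^k g) with p prime to g, and either k = 0 or some a_j prime to p.
   If k > 0, then c_j' has a pole of order exactly k + 1 at p (characteristic zero),
   whereas h_j/(de) and the c_i m_(i,j)/e have poles of order at most 1 and k.
   Hence k = 0, and clearing denominators shows that p divides every h_j, contradicting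
   gcd(h_1, ..., h_n, d) = 1. *)

Section FractionRepresentatives.
Variable R : idomainType.

Lemma tofrac_repr (f : {fraction R}) :
  f = tofrac \n_(repr f) / tofrac \d_(repr f).
Proof.
have numE : tofrac \n_(repr f) = f * tofrac \d_(repr f).
  rewrite -[X in X * _](reprK f); unlock tofrac; rewrite [RHS]/GRing.mul /=.
  rewrite -FracField.pi_mul; apply/eqP; rewrite FracField.equivf_def /FracField.mulf /=.
  by rewrite !numden_Ratio ?mulr1 ?mul1r ?oner_neq0 ?denom_ratioP.
by rewrite numE mulfK // tofrac_eq0 denom_ratioP.
Qed.

Lemma fracP (f : {fraction R}) :
  exists a, exists2 b, b != 0 & f = tofrac a / tofrac b.
Proof. by exists \n_(repr f), \d_(repr f); [exact: denom_ratioP | exact: tofrac_repr]. Qed.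

Lemma eq_tofrac_div (a b c d : R) : b != 0 -> d != 0 ->
  (tofrac a / tofrac b == tofrac c / tofrac d) = (a * d == c * b).
Proof. by move=> b0 d0; rewrite eqr_div ?tofrac_eq0 // -!tofracM tofrac_eq. Qed.

Lemma common_denom n (c : 'I_n -> {fraction R}) :
  exists2 B, B != 0 & exists a : 'I_n -> R, forall i, c i = tofrac (a i) / tofrac B.
Proof.
pose num i := \n_(repr (c i)); pose den i := \d_(repr (c i)).
have den0 i : den i != 0 by exact: denom_ratioP.
exists (\prod_j den j); first by apply/prodf_neq0 => j _.
exists (fun i => num i * \prod_(j | j != i) den j) => i.
rewrite [c i]tofrac_repr; apply/eqP; rewrite eq_tofrac_div; last 2 first.
- exact: den0.
- by apply/prodf_neq0.
by rewrite (bigD1 i) //=; apply/eqP; ring.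
Qed.

Lemma pchar0_fraction : [pchar R] =i pred0 -> [pchar {fraction R}] =i pred0.
Proof.
move=> /pcharf0P charR0; apply/pcharf0P => k.
by rewrite -(rmorph_nat (@tofrac R)) tofrac_eq0 charR0.
Qed.

End FractionRepresentatives.

Section FractionDerivation.
Variable K : fieldType.
Local Notation Kx := {poly K}.
Local Notation F := {fraction Kx}.
Local Notation Dx := (map_poly (@derivF K)).

Lemma derivF_div (a b : Kx) : b != 0 ->
  derivF (toF a / toF b) = toF (a^`() * b - a * b^`()) / toF (b ^+ 2).
Proof.
move=> b0; rewrite /derivF; set N := \n_(repr _); set D := \d_(repr _).
have D0 : D != 0 by exact: denom_ratioP.
have /eqP := tofrac_repr (toF a / toF b); rewrite -/N -/D eq_sym eq_tofrac_div //.
move=> /eqP aDE; apply/eqP; rewrite eq_tofrac_div ?expf_neq0 // -subr_eq0; apply/eqP.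
(* The difference is a combination of N b - a D and of its derivative. *)
transitivity (D * b * ((N * b)^`() - (a * D)^`())
              - (D * b^`() + D^`() * b) * (N * b - a * D)).
  by rewrite !derivM; ring.
by rewrite aDE; ring.
Qed.

Lemma toF_divD (a b c d : Kx) : b != 0 -> d != 0 ->
  toF a / toF b + toF c / toF d = toF (a * d + c * b) / toF (b * d).
Proof. by move=> b0 d0; rewrite addf_div ?tofrac_eq0 // /toF rmorphD !rmorphM. Qed.

Lemma toF_divM (a b c d : Kx) :
  toF a / toF b * (toF c / toF d) = toF (a * c) / toF (b * d).
Proof. by rewrite mulf_div /toF !rmorphM. Qed.

Lemma derivFD (f g : F) : derivF (f + g) = derivF f + derivF g.
Proof.
have [a [b b0 ->]] := fracP f; have [c [d d0 ->]] := fracP g.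
rewrite toF_divD // !derivF_div ?mulf_neq0 // toF_divD ?expf_neq0 //.
apply/eqP; rewrite eq_tofrac_div ?mulf_neq0 ?expf_neq0 //; apply/eqP.
by rewrite !(derivD, derivM); ring.
Qed.

Lemma derivFM (f g : F) : derivF (f * g) = derivF f * g + f * derivF g.
Proof.
have [a [b b0 ->]] := fracP f; have [c [d d0 ->]] := fracP g.
rewrite toF_divM !derivF_div ?mulf_neq0 // !toF_divM toF_divD ?mulf_neq0 ?expf_neq0 //.
apply/eqP; rewrite eq_tofrac_div ?mulf_neq0 ?expf_neq0 //; apply/eqP.
by rewrite !derivM; ring.
Qed.

Lemma derivFB (f g : F) : derivF (f - g) = derivF f - derivF g.
Proof. by apply/esym/eqP; rewrite subr_eq -derivFD subrK. Qed.

HB.instance Definition _ := GRing.isZmodMorphism.Build F F (@derivF K) derivFB.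

Lemma map_derivFZ (c : F) (P : {poly F}) :
  Dx (c *: P) = derivF c *: P + c *: Dx P.
Proof. by apply/polyP => i; rewrite !(coefD, coefZ, coef_map) /= derivFM. Qed.

Lemma map_derivFM (P Q : {poly F}) :
  Dx (P * Q) = Dx P * Q + P * Dx Q.
Proof.
apply/polyP => i; rewrite coefD coef_map /= !coefM raddf_sum -big_split /=.
by apply: eq_bigr => j _; rewrite derivFM !coef_map.
Qed.

End FractionDerivation.

Lemma deriv_neq0_pchar0 (R : fieldType) (p : {poly R}) :
  [pchar R] =i pred0 -> (1 < size p)%N -> p^`() != 0.
Proof.
move=> /pcharf0P charR0 p_gt1; apply/eqP => /(congr1 (coefp (size p).-2)) /=.
rewrite coef_deriv coef0 prednK -?subn1 ?subn_gt0 // subn1 -mulr_natr => /eqP.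
rewrite mulf_eq0 charR0 -/(lead_coef p) lead_coef_eq0 -size_poly_eq0.
by case: (size p) p_gt1 => [|[|k]].
Qed.

Lemma coprimep_deriv (R : fieldType) (p : {poly R}) :
  [pchar R] =i pred0 -> irreducible_poly p -> coprimep p p^`().
Proof.
move=> charR0 irr_p; rewrite irreducible_poly_coprime // gtNdvdp //.
  exact: deriv_neq0_pchar0 irr_p.1.
exact/lt_size_deriv/irredp_neq0.
Qed.

Lemma invmodP (K : fieldType) (a b : {poly {fraction {poly K}}}) :
  coprimep a b -> b %| a * invmod a b - 1.
Proof.
move=> /coprimep_size_gcd; rewrite /invmod (eqp_size (egcdpE a b)).
set u := egcdp a b => /eqP /size_poly1P[c c0 uE].
have Bezout : u.1 * a = c%:P - u.2 * b by rewrite -uE addrK.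
rewrite uE coefC /= -scalerAr mulrC Bezout -mul_polyC.
by rewrite mulrBr -polyCM mulVf // polyC1 addrAC subrr add0r mulrA dvdpNr dvdp_mull.
Qed.

Lemma modpB (R : fieldType) (d P Q : {poly R}) : (P - Q) %% d = P %% d - Q %% d.
Proof. by rewrite modpD modpN. Qed.

Lemma modp_sum (R : fieldType) (d : {poly R}) (I : Type) (r : seq I)
    (G : I -> {poly R}) :
  (\sum_(i <- r) G i) %% d = \sum_(i <- r) (G i %% d).
Proof. exact: (big_morph (fun P => P %% d) (modpD d) (mod0p d)). Qed.

Section AlgebraDerivation.
Variable K : fieldType.
Hypothesis charK0 : [pchar K] =i pred0.
Local Notation Kx := {poly K}.
Local Notation F := {fraction Kx}.
Local Notation Dx := (map_poly (@derivF K)).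
Variable m : {poly Kx}.
Hypothesis m_irr : irreducible_poly (liftm m).
Local Notation lm := (liftm m).

Lemma derAB (P Q : {poly F}) : derA m (P - Q) = derA m P - derA m Q.
Proof. by rewrite /derA raddfB derivB mulrBl -modpN -modpD addrACA opprD. Qed.

HB.instance Definition _ :=
  GRing.isZmodMorphism.Build {poly F} {poly F} (derA m) derAB.

Lemma derA_mod (P : {poly F}) : derA m P %% lm = derA m P.
Proof. exact: modp_id. Qed.

Lemma derAZ (c : F) (P : {poly F}) :
  derA m (c *: P) = derivF c *: (P %% lm) + c *: derA m P.
Proof.
by rewrite /derA map_derivFZ derivZ -scalerAl -addrA -scalerDr modpD !modpZl.
Qed.

Lemma derA_mull_liftm (Q : {poly F}) : derA m (Q * lm) = 0.
Proof.
have charF0 : [pchar F] =i pred0 by apply: pchar0_fraction => p; rewrite pchar_poly charK0.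
have := coprimep_deriv charF0 m_irr.
rewrite coprimep_sym => /invmodP; set i := invmod _ _ => /dvdpP[u iE].
(* [i] inverts [lm^`()] modulo [lm], so [Dx lm + lm^`() * yprime m] is a multiple of [lm]. *)
apply/modp_eq0P; rewrite /yprime -/i map_derivFM derivM.
have -> : Dx Q * lm + Q * Dx lm + (Q^`() * lm + Q * lm^`()) * (- Dx lm * i)
    = (Dx Q + Q^`() * (- Dx lm * i)) * lm - Q * Dx lm * (lm^`() * i - 1).
  by ring.
by rewrite iE mulrA dvdp_sub ?dvdp_mull.
Qed.

Lemma derA_eqA (P Q : {poly F}) : eqA m P Q -> derA m P = derA m Q.
Proof.
move=> /modp_eq0P/divpK PQE; apply/eqP.
by rewrite -subr_eq0 -raddfB /= -PQE derA_mull_liftm.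
Qed.

Section Coordinates.
Variables (n : nat) (W : 'I_n -> {poly F}) (e : Kx) (M : 'M[Kx]_n).
Hypotheses (e0 : e != 0) (WeM : derRel m W e M).

Definition derA_coord (c : 'I_n -> F) (j : 'I_n) : F :=
  derivF (c j) + (\sum_i c i * toF (M i j)) / toF e.

Lemma derA_basis i : derA m (W i) = (\sum_j (toF (M i j) / toF e) *: W j) %% lm.
Proof.
have e0F : toF e != 0 by rewrite tofrac_eq0.
have /eqP := WeM i; rewrite /eqA modpB modpZl derA_mod subr_eq0 => /eqP eE.
transitivity ((toF e)^-1 *: (toF e *: derA m (W i))).
  by rewrite scalerA mulVf ?scale1r.
rewrite eE -modpZl scaler_sumr; congr (_ %% _).
by apply: eq_bigr => j _; rewrite scalerA mulrC.
Qed.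

Lemma derA_lincomb (c : 'I_n -> F) :
  derA m (\sum_i c i *: W i) = (\sum_j derA_coord c j *: W j) %% lm.
Proof.
rewrite raddf_sum /=; under eq_bigr do rewrite derAZ derA_basis -!modpZl -modpD.
rewrite -modp_sum; congr (_ %% _).
rewrite big_split /=; under [in RHS]eq_bigr do rewrite scalerDl.
rewrite big_split /=; congr (_ + _).
under eq_bigr do rewrite scaler_sumr.
rewrite exchange_big /=; apply: eq_bigr => j _.
by rewrite mulr_suml scaler_suml; apply: eq_bigr => i _; rewrite scalerA mulrA.
Qed.

Lemma coord_derA (W_basis : basisA m W) (c hc : 'I_n -> F) (H : {poly F}) :
  eqA m H (\sum_i c i *: W i) -> eqA m (derA m H) (\sum_i hc i *: W i) ->
  forall j, hc j = derA_coord c j.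
Proof.
move=> /derA_eqA; rewrite derA_lincomb /eqA => -> dHE.
have : eqA m (\sum_j (derA_coord c j - hc j) *: W j) 0.
  under eq_bigr do rewrite scalerBl.
  by rewrite /eqA subr0 sumrB modpB -[in LHS]modp_id -modpB.
by move=> /W_basis.1 coord0 j; apply/esym/eqP; rewrite -subr_eq0 coord0.
Qed.

End Coordinates.
End AlgebraDerivation.

Section IrreducibleFactors.
Variable R : fieldType.
Implicit Types p q : {poly R}.

Lemma irreducible_factor p : (1 < size p)%N -> exists2 q, irreducible_poly q & q %| p.
Proof.
have [N] := ubnP (size p); elim: N p => // N IH p ltpN p_gt1.
have [p_irr | p_red] := classic (irreducible_poly p); first by exists p.
have [q [q_n1 q_p q_np]] : exists q, [/\ size q != 1%N, q %| p & ~~ (q %= p)].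
  apply: NNPP => no_q; apply: p_red; split=> // q q_n1 q_p.
  by apply/negPn/negP => q_np; apply: no_q; exists q.
have p0 : p != 0 by rewrite -size_poly_gt0 ltnW.
have q0 : q != 0 by apply: contraNneq p0 => q0; rewrite -dvd0p -q0.
have ltqp : (size q < size p)%N.
  by rewrite ltn_neqAle (dvdp_leq p0 q_p) (dvdp_size_eqp q_p) q_np.
have q_gt1 : (1 < size q)%N by rewrite ltn_neqAle eq_sym q_n1 size_poly_gt0.
have [r r_irr r_q] := IH q (leq_trans ltqp ltpN) q_gt1.
by exists r => //; exact: dvdp_trans q_p.
Qed.

Lemma split_pfactor p q : (1 < size p)%N -> q != 0 ->
  exists k, exists2 g, ~~ (p %| g) & q = p ^+ k * g.
Proof.
move=> p_gt1; have [N] := ubnP (size q); elim: N q => // N IH q ltqN q0.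
have [/dvdpP[q1 qE] | p_nq] := boolP (p %| q); last by exists 0%N, q; rewrite ?mul1r.
have q10 : q1 != 0 by apply: contraNneq q0 => q10; rewrite qE q10 mul0r.
have ltq1q : (size q1 < size q)%N.
  rewrite qE size_mul //; last by rewrite -size_poly_gt0 ltnW.
  by case: (size p) p_gt1 => [|[|s]] // _; rewrite !addnS ltnS leq_addr.
have [k [g p_g q1E]] := IH q1 (leq_trans ltq1q ltqN) q10.
by exists k.+1, g; rewrite // qE q1E exprSr mulrAC.
Qed.

End IrreducibleFactors.

Lemma pole_decomposition (K : fieldType) n (c : 'I_n -> {fraction {poly K}})
    (p : {poly K}) : (1 < size p)%N ->
  exists k (a : 'I_n -> {poly K}) (g : {poly K}), [/\ g != 0, ~~ (p %| g),
    forall i, c i = toF (a i) / toF (p ^+ k * g) & k = 0%N \/ exists j, ~~ (p %| a j)].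
Proof.
move=> p_gt1; have p0 : p != 0 by rewrite -size_poly_gt0 ltnW.
have [B B0 [a cE]] := common_denom c; have [k [g p_g BE]] := split_pfactor p_gt1 B0.
have g0 : g != 0 by apply: contraNneq B0 => g0; rewrite BE g0 mulr0.
rewrite {B B0}BE in cE; elim: k a cE => [|k IH] a cE.
  by exists 0%N, a, g; split=> //; left.
have [p_a | /forallPn[j p_aj]] := boolP [forall j, p %| a j]; last first.
  by exists k.+1, a, g; split=> //; right; exists j.
apply: (IH (fun i => a i %/ p)) => i; rewrite cE; apply/eqP.
rewrite eq_tofrac_div ?mulf_neq0 ?expf_neq0 //; apply/eqP.
by rewrite -{1}(divpK (forallP p_a i)) exprS; ring.
Qed.

Section SimplePole.
Variable R : fieldType.
Hypothesis charR0 : [pchar R] =i pred0.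
Variables p d e : {poly R}.
Hypotheses (p_irr : irreducible_poly p) (p_d : p %| d) (p2_nd : ~~ (p * p %| d)).
Hypothesis (p_ne : ~~ (p %| e)).

Lemma dvdp_numer_nopole (h a S B : {poly R}) : ~~ (p %| B) ->
  h * B ^+ 2 = (a^`() * B - a * B^`()) * d * e + S * d * B -> p %| h.
Proof.
move=> p_nB hE.
have pB : coprimep p (B ^+ 2) by rewrite coprimep_expr ?irreducible_poly_coprime.
by rewrite -(Gauss_dvdpl h pB) hE dvdp_add // dvdp_mulr // dvdp_mull.
Qed.

Lemma dvdp_numer_pole (h a S g : {poly R}) (k : nat) : ~~ (p %| g) ->
  let B := p ^+ k.+1 * g in
  h * B ^+ 2 = (a^`() * B - a * B^`()) * d * e + S * d * B -> p %| a.
Proof.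
move=> p_ng /=; have [d0 dE] := dvdpP _ _ p_d.
have p_nd0 : ~~ (p %| d0) by apply: contra p2_nd; rewrite dE => p_d0; rewrite dvdp_mul.
have p0 : p != 0 := irredp_neq0 p_irr.
rewrite dE derivM deriv_exp -mulr_natr [p ^+ k.+1]exprS; set t := p ^+ k => hE.
have t0 : t != 0 by rewrite expf_neq0.
set N := k.+1%:R : {poly R}.
set Y := (a^`() * g - a * g^`()) * d0 * e + S * d0 * g - h * t * g ^+ 2.
(* After cancelling p^(k+1), the only term not divisible by p comes from (p^(k+1))'. *)
have key : p * t * (N * (a * p^`() * g * d0 * e)) = p * t * (p * Y).
  apply/eqP; rewrite -subr_eq0 -(subrr (h * (p * t * g) ^+ 2)) {2}hE /N /Y; apply/eqP; ring.
have {key} : p %| N * (a * p^`() * g * d0 * e) by rewrite (mulfI _ key) ?mulf_neq0 // dvdp_mulr.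
have cop q : ~~ (p %| q) -> coprimep p q by rewrite irreducible_poly_coprime.
have p_np' : ~~ (p %| p^`()).
  by rewrite gtNdvdp ?lt_size_deriv // deriv_neq0_pchar0 // p_irr.1.
rewrite /N -polyC_natr mul_polyC dvdpZr; last by move/pcharf0P: charR0 => ->.
by rewrite !Gauss_dvdpl ?cop.
Qed.

End SimplePole.

Lemma clear_denominators (K : fieldType) n (c : 'I_n -> {fraction {poly K}})
    (a u : 'I_n -> {poly K}) (B h d e : {poly K}) (j : 'I_n) :
  B != 0 -> d != 0 -> e != 0 -> (forall i, c i = toF (a i) / toF B) ->
  toF h / toF (d * e) = derivF (c j) + (\sum_i c i * toF (u i)) / toF e ->
  h * B ^+ 2 = ((a j)^`() * B - a j * B^`()) * d * e + (\sum_i a i * u i) * d * B.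
Proof.
move=> B0 d0 e0 cE; set S := \sum_i a i * u i.
have -> : \sum_i c i * toF (u i) = toF S / toF B.
  rewrite /toF rmorph_sum mulr_suml; apply: eq_bigr => i _.
  by rewrite cE rmorphM mulrAC.
have -> : toF S / toF B / toF e = toF S / toF (B * e) by rewrite -mulrA -invfM /toF rmorphM.
rewrite cE derivF_div // toF_divD ?expf_neq0 ?mulf_neq0 //.
move=> /eqP; rewrite eq_tofrac_div ?mulf_neq0 ?expf_neq0 // => /eqP hE.
apply: (mulIf (mulf_neq0 B0 e0)).
transitivity (h * (B ^+ 2 * (B * e))); first by ring.
by rewrite hE; ring.
Qed.

Theorem theorem8 (K : fieldType) (hchar : [pchar K] =i pred0)
  (m : {poly {poly K}}) (n : nat)
  (hirr : irreducible_poly (liftm m)) (hn : (size m).-1 = n)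
  (W : 'I_n -> {poly {fraction {poly K}}}) (hW : suitable m W)
  (e : {poly K}) (M : 'M[{poly K}]_n)
  (hrel : derRel m W e M) (hgcd : coprime_mx e M)
  (hs : 'I_n -> {poly K}) (d : {poly K})
  (hde : coprimep d e)
  (hhd : forall q : {poly K}, q %| d -> (forall i, q %| hs i) -> (size q <= 1)%N)
  (hsqf : squarefree d) :
  integrableA m (\sum_(i < n) (toF (hs i) / toF (d * e)) *: W i) ->
  (size d <= 1)%N.
Proof.
move=> [H dH]; rewrite leqNgt; apply/negP => d_gt1.
have d0 : d != 0 by rewrite -size_poly_gt0 ltnW.
have e0 : e != 0 by apply: contraTneq hde => ->; rewrite coprimep0 -size_poly_eq1 gtn_eqF.
have [p p_irr p_d] := irreducible_factor d_gt1.
have p_gt1 := p_irr.1.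
have p2_nd : ~~ (p * p %| d) by apply/negP => /hsqf; rewrite leqNgt p_gt1.
have p_ne : ~~ (p %| e) by rewrite -irreducible_poly_coprime // (coprimep_dvdr p_d hde).
have [c Hc] := hW.1.2 H.
have [k [a [g [g0 p_ng cE kP]]]] := pole_decomposition c p_gt1.
have B0 : p ^+ k * g != 0 by rewrite mulf_neq0 ?expf_neq0 ?(irredp_neq0 p_irr).
have hE j := clear_denominators B0 d0 e0 cE (coord_derA hchar hirr e0 hrel hW.1 Hc dH j).
case: k kP {cE B0} hE => [_ | k [//|[j p_naj]]] hE.
  suff : (size p <= 1)%N by rewrite leqNgt p_gt1.
  apply: (hhd _ p_d) => i; apply: (dvdp_numer_nopole p_irr p_d p_ng).
  by rewrite -[g]mul1r -(expr0 p) hE.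
by case/negP: p_naj; exact: (dvdp_numer_pole hchar p_irr p_d p2_nd p_ne p_ng (hE j)).
Qed.
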